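(* Let $n_1,\dots,n_m$ be positive integers, $n=\prod_j n_j$, $\Omega=\times_{j=1}^m\{x\in\mathbb{C}^{n_j}:x^\dagger x=1\}$, and let $\mathcal{L}_R=\{g_G(x_1,\dots,x_m)=(\otimes_j x_j)^\dagger G(\otimes_j x_j): G\ \text{an } n\times n\text{ Hermitian matrix}\}$, a real vector space of real functions on $\Omega$. Let $\Sigma^{\geq}=\{g_G: G\succeq0\}$ and $\Sigma^{<}=\{g_G: G\prec 0\}$. Let $\mathscr{C}\subseteq\mathcal{L}_R$ be a P-coherent set of desirable gambles, i.e. a closed convex cone with $\Sigma^{\geq}\subseteq\mathscr{C}$ and $\mathscr{C}\cap\Sigma^{<}=\emptyset$. For a linear functional $L$ on $\mathcal{L}_R$ define the Hermitian matrix $Z=L\big((\otimes_j x_j)(\otimes_j x_j)^\dagger\big)$ (entrywise, $L$ extended complex-linearly), so that $L(g_G)=\operatorname{Tr}(GZ)$. Then the dual cone $\mathscr{C}^\circ=\{L: L(g)\ge0\ \forall g\in\mathscr{C}\}$ equals the set of those $L$ whose matrix $Z$ satisfies $Z\succeq0$ and $\operatorname{Tr}(GZ)\ge0$ for all $g_G\in\mathscr{C}$.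
   Context: $G\succeq0$ means positive semidefinite, $G\prec0$ negative definite. *)

From HB Require Import structures.
From mathcomp Require Import all_boot all_order all_algebra.
From mathcomp Require Import reals.
From mathcomp Require Import complex.
Set Implicit Arguments. Unset Strict Implicit. Unset Printing Implicit Defensive.
Import Order.TTheory GRing.Theory Num.Theory.
Local Open Scope ring_scope.

Definition adj (R : realType) (p q : nat) (A : 'M[R[i]]_(p, q)) : 'M[R[i]]_(q, p) :=
  (map_mx (fun z : R[i] => z^*) A)^T.

Definition herm_mx (R : realType) (p : nat) (A : 'M[R[i]]_p) : Prop := adj A = A.

Definition psd (R : realType) (p : nat) (A : 'M[R[i]]_p) : Prop :=
  herm_mx A /\ forall v : 'cV[R[i]]_p, 0 <= (adj v *m A *m v) 0 0.

Definition negdef (R : realType) (p : nat) (A : 'M[R[i]]_p) : Prop :=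
  herm_mx A /\ forall v : 'cV[R[i]]_p, v != 0 -> (adj v *m A *m v) 0 0 < 0.

(* multi-indices (i_1,...,i_m), i_j < n_j; the tensor space C^n, n = prod n_j,
   has its basis indexed by them (via enum_val) *)
Definition Idx (m : nat) (ns : 'I_m -> nat) := {dffun forall j : 'I_m, 'I_(ns j)}.
Definition tdim (m : nat) (ns : 'I_m -> nat) : nat := #|{: Idx ns}|.

Definition vecs (R : realType) (m : nat) (ns : 'I_m -> nat) :=
  forall j : 'I_m, 'cV[R[i]]_(ns j).

Definition Omega (R : realType) (m : nat) (ns : 'I_m -> nat) :=
  {x : vecs R ns | forall j, (adj (x j) *m x j) 0 0 = 1}.

Definition tensvec (R : realType) (m : nat) (ns : 'I_m -> nat) (x : vecs R ns)
  : 'cV[R[i]]_(tdim ns) :=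
  \col_(a < tdim ns) \prod_(j < m) x j (@enum_val _ (@predT (Idx ns)) a j) 0.

Definition psi (R : realType) (m : nat) (ns : 'I_m -> nat) (x : Omega R ns) :=
  tensvec (sval x).

(* g_G(x) = (x)x^dagger G (x)x   (real for herm_mx G) *)
Definition gG (R : realType) (m : nat) (ns : 'I_m -> nat) (G : 'M[R[i]]_(tdim ns))
  : Omega R ns -> R :=
  fun x => complex.Re ((adj (psi x) *m G *m psi x) 0 0).

Definition LR (R : realType) (m : nat) (ns : 'I_m -> nat) (f : Omega R ns -> R) : Prop :=
  exists G : 'M[R[i]]_(tdim ns), herm_mx G /\ f = gG G.

Definition convex_cone (R : realType) (m : nat) (ns : 'I_m -> nat)
  (Cs : (Omega R ns -> R) -> Prop) : Prop :=
  forall f g (a b : R), Cs f -> Cs g -> 0 <= a -> 0 <= b ->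
    Cs (fun x => a * f x + b * g x).

(* closedness in the finite-dimensional space L_R (sequential, pointwise
   convergence; equivalent to norm-closedness on L_R) *)
Definition closed_in_LR (R : realType) (m : nat) (ns : 'I_m -> nat)
  (Cs : (Omega R ns -> R) -> Prop) : Prop :=
  forall (u : nat -> Omega R ns -> R) (f : Omega R ns -> R),
    (forall k, Cs (u k)) -> LR f ->
    (forall x (e : R), 0 < e -> exists N : nat, forall k : nat, (N <= k)%N ->
        `|u k x - f x| < e) ->
    Cs f.

Definition P_coherent (R : realType) (m : nat) (ns : 'I_m -> nat)
  (Cs : (Omega R ns -> R) -> Prop) : Prop :=
  [/\ (forall f, Cs f -> LR f),
      convex_cone Cs,
      closed_in_LR Cs,
      (forall G, psd G -> Cs (gG G)) &
      (forall G, negdef G -> ~ Cs (gG G))].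

Definition linear_on_LR (R : realType) (m : nat) (ns : 'I_m -> nat)
  (L : (Omega R ns -> R) -> R) : Prop :=
  forall f g (a b : R), LR f -> LR g ->
    L (fun x => a * f x + b * g x) = a * L f + b * L g.

(* Z = L((x)x (x)x^dagger) entrywise, L extended complex-linearly:
   L(h) = L(Re h) + i L(Im h) *)
Definition Zmat (R : realType) (m : nat) (ns : 'I_m -> nat)
  (L : (Omega R ns -> R) -> R) : 'M[R[i]]_(tdim ns) :=
  \matrix_(a, b)
    (Complex (L (fun x => complex.Re (psi x a 0 * (psi x b 0)^*)))
             (L (fun x => complex.Im (psi x a 0 * (psi x b 0)^*)))).

Definition in_dual (R : realType) (m : nat) (ns : 'I_m -> nat)
  (Cs : (Omega R ns -> R) -> Prop) (L : (Omega R ns -> R) -> R) : Prop :=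
  forall g, Cs g -> 0 <= L g.

From HB Require Import structures.
From mathcomp Require Import all_boot all_order all_algebra.
From mathcomp Require Import boolp reals.
From mathcomp Require Import complex.
From mathcomp Require Import ring lra.
Set Implicit Arguments. Unset Strict Implicit. Unset Printing Implicit Defensive.
Import Order.TTheory GRing.Theory Num.Theory.
Local Open Scope ring_scope.

(* Extend L complex-linearly to all n x n matrices by
   [Lext G = L (Re g_G) + i L (Im g_G)], where [g_G x = psi(x)^dagger G psi(x)].
   Expanding G in the basis of matrix units shows [Lext G = Tr (G Z)], and for
   Hermitian G this is the real number [L (g_G)].  Hence Z is Hermitian, and
   [v^dagger Z v = Tr (v v^dagger Z) = L (g_(v v^dagger))], which is nonnegative
   when L is in the dual cone because [v v^dagger >= 0] and the cone contains
   Sigma^>=.  Conversely every g in the cone is some g_G with G Hermitian, so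
   [L g = Tr (G Z) >= 0]. *)

Section Adjoint.
Variable R : realType.

Lemma adj_mul p q r (A : 'M[R[i]]_(p, q)) (B : 'M_(q, r)) :
  adj (A *m B) = adj B *m adj A.
Proof.
apply/matrixP=> i j; rewrite !mxE rmorph_sum; apply: eq_bigr => k _.
by rewrite !mxE rmorphM mulrC.
Qed.

Lemma adjK p q (A : 'M[R[i]]_(p, q)) : adj (adj A) = A.
Proof. by apply/matrixP=> i j; rewrite !mxE conjCK. Qed.

Lemma adjD p q (A B : 'M[R[i]]_(p, q)) : adj (A + B) = adj A + adj B.
Proof. by apply/matrixP=> i j; rewrite !mxE rmorphD. Qed.

Lemma adjZ p q c (A : 'M[R[i]]_(p, q)) : adj (c *: A) = c^* *: adj A.
Proof. by apply/matrixP=> i j; rewrite !mxE rmorphM. Qed.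

Lemma adj_delta p q (a : 'I_p) (b : 'I_q) :
  adj (delta_mx a b : 'M[R[i]]_(p, q)) = delta_mx b a.
Proof. by apply/matrixP=> i j; rewrite !mxE rmorph_nat andbC. Qed.

Lemma adj_mx11 (A : 'M[R[i]]_1) : adj A 0 0 = (A 0 0)^*.
Proof. by rewrite !mxE. Qed.

Lemma psd_mul_adj p (v : 'cV[R[i]]_p) : psd (v *m adj v).
Proof.
split=> [|w]; first by rewrite /herm_mx adj_mul adjK.
have -> : adj w *m (v *m adj v) *m w = (adj w *m v) *m (adj v *m w).
  by rewrite !mulmxA.
rewrite mxE big_ord1.
by rewrite -[adj v *m w]adjK adj_mul adjK adj_mx11 mul_conjC_ge0.
Qed.

End Adjoint.

Section TensorForm.
Variables (R : realType) (m : nat) (ns : 'I_m -> nat).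
Local Notation M := 'M[R[i]]_(tdim ns).
Local Notation Om := (Omega R ns).
Implicit Types G H : M.

Definition tform (G : M) (x : Om) : R[i] := (adj (psi x) *m G *m psi x) 0 0.

Definition gG_im (G : M) : Om -> R := fun x => complex.Im (tform G x).

Lemma tformD G H x : tform (G + H) x = tform G x + tform H x.
Proof. by rewrite /tform mulmxDr mulmxDl mxE. Qed.

Lemma tformZ c G x : tform (c *: G) x = c * tform G x.
Proof. by rewrite /tform -scalemxAr -scalemxAl mxE. Qed.

Lemma tform_adj G x : tform (adj G) x = (tform G x)^*.
Proof. by rewrite /tform -adj_mx11 !adj_mul adjK mulmxA. Qed.

Lemma tform_delta a b x : tform (delta_mx a b) x = (psi x a 0)^* * psi x b 0.
Proof.
rewrite /tform !mxE (bigD1 b) //= big1 ?addr0.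
  rewrite !mxE (bigD1 a) //= big1 ?addr0; first by rewrite !mxE !eqxx mulr1.
  by move=> k /negbTE nk; rewrite !mxE nk mulr0.
move=> k /negbTE nk; rewrite !mxE big1 ?mul0r // => l _.
by rewrite !mxE nk andbF mulr0.
Qed.

Lemma gGD G H : gG (G + H) = fun x => gG G x + gG H x.
Proof.
apply: funext => x; rewrite /gG -!/(tform _ x) tformD.
by case: (tform G x); case: (tform H x).
Qed.

Lemma gG_imD G H : gG_im (G + H) = fun x => gG_im G x + gG_im H x.
Proof.
apply: funext => x; rewrite /gG_im tformD.
by case: (tform G x); case: (tform H x).
Qed.

Lemma gGZ c G :
  gG (c *: G) = fun x => complex.Re c * gG G x + (- complex.Im c) * gG_im G x.
Proof.
apply: funext => x; rewrite /gG /gG_im -!/(tform _ x) tformZ.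
by case: c => ? ?; case: (tform G x) => ? ? /=; ring.
Qed.

Lemma gG_imZ c G :
  gG_im (c *: G) = fun x => complex.Im c * gG G x + complex.Re c * gG_im G x.
Proof.
apply: funext => x; rewrite /gG /gG_im -!/(tform _ x) tformZ.
by case: c => ? ?; case: (tform G x) => ? ? /=; ring.
Qed.

Lemma gG_adj G : gG (adj G) = gG G.
Proof.
by apply: funext => x; rewrite /gG -!/(tform _ x) tform_adj; case: (tform G x).
Qed.

Lemma gG_im_adj G : gG_im (adj G) = fun x => - gG_im G x.
Proof. by apply: funext => x; rewrite /gG_im tform_adj; case: (tform G x). Qed.

Lemma gG_im_herm G : herm_mx G -> gG_im G = fun _ => 0.
Proof.
move=> hG; apply: funext => x; rewrite /gG_im.
by have := tform_adj G x; rewrite hG; case: (tform G x) => a b /= [] ; lra.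
Qed.

(* [g_G = g_H] for the Hermitian part [H = (G + G^dagger) / 2]. *)
Lemma LR_gG G : LR (gG G).
Proof.
exists ((1 / 2)%:C%C *: (G + adj G)); split.
  by rewrite /herm_mx adjZ adjD adjK addrC [_^*](conjc_real (1 / 2)).
rewrite gGZ gGD gG_adj; apply: funext => x /=; lra.
Qed.

Lemma gG_imE G : gG_im G = gG (- 'i%C *: G).
Proof. by rewrite gGZ; apply: funext => x /=; ring. Qed.

Lemma LR_gG_im G : LR (gG_im G).
Proof. by rewrite gG_imE; apply: LR_gG. Qed.

End TensorForm.

Section ComplexExtension.
Variables (R : realType) (m : nat) (ns : 'I_m -> nat).
Variable L : (Omega R ns -> R) -> R.
Hypothesis L_lin : linear_on_LR L.
Local Notation M := 'M[R[i]]_(tdim ns).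
Implicit Types G H : M.

Definition Lext (G : M) : R[i] := Complex (L (gG G)) (L (gG_im G)).

Lemma L_add f g : LR f -> LR g -> L (fun x => f x + g x) = L f + L g.
Proof.
move=> hf hg; have := L_lin 1 1 hf hg; rewrite !mul1r => <-.
by congr L; apply: funext => x; rewrite !mul1r.
Qed.

Lemma L_scale a f : LR f -> L (fun x => a * f x) = a * L f.
Proof.
move=> hf; have := L_lin a 0 hf hf; rewrite mul0r addr0 => <-.
by congr L; apply: funext => x; rewrite mul0r addr0.
Qed.

Lemma L_zero : L (fun _ => 0) = 0.
Proof.
have -> : (fun=> 0) = (fun x => 0 * gG (0 : M) x).
  by apply: funext => x; rewrite mul0r.
by rewrite L_scale ?mul0r //; apply: LR_gG.
Qed.

Lemma L_opp f : LR f -> L (fun x => - f x) = - L f.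
Proof.
move=> hf; rewrite -mulN1r -L_scale //.
by congr L; apply: funext => x; rewrite mulN1r.
Qed.

Lemma LextD G H : Lext (G + H) = Lext G + Lext H.
Proof. by rewrite /Lext gGD gG_imD !L_add //; (apply: LR_gG || apply: LR_gG_im). Qed.

Lemma LextZ c G : Lext (c *: G) = c * Lext G.
Proof.
rewrite /Lext gGZ gG_imZ !L_lin; try (apply: LR_gG || apply: LR_gG_im).
by case: c => a b /=; congr Complex; ring.
Qed.

Lemma Lext0 : Lext 0 = 0.
Proof. by rewrite -(scale0r (0 : M)) LextZ mul0r. Qed.

Lemma Lext_adj G : Lext (adj G) = (Lext G)^*.
Proof. by rewrite /Lext gG_adj gG_im_adj L_opp //; apply: LR_gG_im. Qed.

Lemma Lext_herm G : herm_mx G -> Lext G = (L (gG G))%:C%C.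
Proof. by move=> hG; rewrite /Lext gG_im_herm // L_zero. Qed.

Lemma Zmat_delta a b : Zmat L b a = Lext (delta_mx a b).
Proof.
rewrite mxE /Lext /gG_im; congr Complex; congr L; apply: funext => x;
by rewrite ?/gG -?/(tform _ x) tform_delta mulrC.
Qed.

Lemma mxtrace_mul_Zmat G : \tr (G *m Zmat L) = Lext G.
Proof.
rewrite {2}(matrix_sum_delta G) (big_morph Lext LextD Lext0).
apply: eq_bigr => a _; rewrite mxE (big_morph Lext LextD Lext0).
by apply: eq_bigr => b _; rewrite LextZ Zmat_delta.
Qed.

Lemma mxtrace_mul_Zmat_herm G :
  herm_mx G -> \tr (G *m Zmat L) = (L (gG G))%:C%C.
Proof. by move=> hG; rewrite mxtrace_mul_Zmat Lext_herm. Qed.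

Lemma herm_Zmat : herm_mx (Zmat L).
Proof.
apply/matrixP => a b.
have -> : adj (Zmat L) a b = (Zmat L b a)^* by rewrite !mxE.
by rewrite !Zmat_delta -Lext_adj adj_delta.
Qed.

Lemma Zmat_form (v : 'cV[R[i]]_(tdim ns)) :
  (adj v *m Zmat L *m v) 0 0 = (L (gG (v *m adj v)))%:C%C.
Proof.
rewrite -trace_mx11 mxtrace_mulC mulmxA mxtrace_mul_Zmat_herm //.
by case: (psd_mul_adj v).
Qed.

End ComplexExtension.

Theorem proposition10 (R : realType) (m : nat) (ns : 'I_m -> nat)
  (ns_pos : forall j, (0 < ns j)%N)
  (Cs : (Omega R ns -> R) -> Prop) (L : (Omega R ns -> R) -> R) :
  P_coherent Cs -> linear_on_LR L ->
  (in_dual Cs L <->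
   (psd (Zmat L) /\
    forall G : 'M[R[i]]_(tdim ns), herm_mx G -> Cs (gG G) ->
      0 <= \tr (G *m Zmat L))).
Proof.
move=> [Cs_LR _ _ Cs_psd _] L_lin; split.
- move=> L_dual; split; first split.
  + exact: herm_Zmat.
  + move=> v; rewrite Zmat_form // ler0c.
    exact/L_dual/Cs_psd/psd_mul_adj.
  + by move=> G hG Cs_G; rewrite mxtrace_mul_Zmat_herm // ler0c; apply: L_dual.
- move=> [_ Z_dual] g Cs_g; have [G [hG g_def]] := Cs_LR g Cs_g.
  rewrite g_def in Cs_g *.
  by have := Z_dual G hG Cs_g; rewrite mxtrace_mul_Zmat_herm // ler0c.
Qed.
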